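(* With $\varepsilon,N,q,P_{(0)},d$ as in the context, assume $4d^2<1$ and put $w_\pm=\frac{-1\pm\sqrt{1-4d^2}}{2d^2}$. Then $\hat R(w_\pm)=I+w_\pm P_{(0)}$ satisfy the braid equation $$\hat R_{12}(w_\pm)\hat R_{23}(w_\pm)\hat R_{12}(w_\pm)=\hat R_{23}(w_\pm)\hat R_{12}(w_\pm)\hat R_{23}(w_\pm),$$ and $\hat R(w_+)\hat R(w_-)=I$. Moreover, for every $w\in\mathbb C$, $\hat R(w)=\frac{(w-w_-)\hat R(w_+)-(w-w_+)\hat R(w_-)}{w_+-w_-}$.
   Context: Let $\varepsilon\in\{1,-1\}$, $N\ge 2$ (with $N=2n$ even if $\varepsilon=-1$), $q>0$, $[x]=(q^x-q^{-x})/(q-q^{-1})$ ($[x]=x$ if $q=1$). Define $\rho=(n-\tfrac12,\dots,\tfrac12,0,-\tfrac12,\dots,-n+\tfrac12)$ if $\varepsilon=1,N=2n+1$; $\rho=(n-1,\dots,1,0,0,-1,\dots,-n+1)$ if $\varepsilon=1,N=2n$; $\rho=(n,\dots,1,-1,\dots,-n)$ if $\varepsilon=-1,N=2n$. Let $\epsilon_i=1$ for all $i$ if $\varepsilon=1$; $\epsilon_i=1$ for $i\le n$ and $-1$ for $i>n$ if $\varepsilon=-1$. With $i'=N+1-i$ and matrix units $E_{ij}$, $P_{(0)}=(1+\varepsilon[N-\varepsilon])^{-1}\sum_{i,j}q^{\rho_i-\rho_j}\epsilon_i\epsilon_jE_{i',j}\otimes E_{i,j'}$ on $\mathbb C^N\otimes\mathbb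 C^N$; $1+\varepsilon[N-\varepsilon]\neq0$ is assumed and $d=(1+\varepsilon[N-\varepsilon])^{-1}$. $\hat R(w)=I+wP_{(0)}$; $A_{12}=A\otimes I$, $A_{23}=I\otimes A$. *)

From mathcomp Require Import all_boot all_order all_algebra.
From mathcomp Require Import zify.
Set Implicit Arguments. Unset Strict Implicit. Unset Printing Implicit Defensive.
Import Order.TTheory GRing.Theory Num.Theory.
Local Open Scope ring_scope.

Lemma pidx_proof m n (a : 'I_m) (b : 'I_n) : (a * n + b < m * n)%N.
Proof.
have ha := ltn_ord a; have hb := ltn_ord b.
have : (a.+1 * n <= m * n)%N by rewrite leq_mul2r ha orbT.
rewrite mulSn; lia.
Qed.

Definition pidx m n (a : 'I_m) (b : 'I_n) : 'I_(m * n) := Ordinal (pidx_proof a b).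

(* Kronecker (tensor) product of matrices, w.r.t. the row-major identification
   C^m (x) C^p = C^(m*p) given by pidx. *)
Definition kron (R : pzRingType) m n p r (A : 'M[R]_(m, n)) (B : 'M[R]_(p, r))
  : 'M[R]_(m * p, n * r) :=
  \matrix_(i, j) \sum_(a < m) \sum_(b < p) \sum_(c < n) \sum_(e < r)
     (if (pidx a b == i) && (pidx c e == j) then A a c * B b e else 0).

(* A_{12} = A (x) I and A_{23} = I (x) A on C^N (x) C^N (x) C^N,
   both viewed as N*N*N square matrices (associativity of the flattening). *)
Definition op12 (R : pzRingType) N (A : 'M[R]_(N * N)) : 'M[R]_(N * N * N) :=
  kron A (1%:M : 'M[R]_N).
Definition op23 (R : pzRingType) N (A : 'M[R]_(N * N)) : 'M[R]_(N * N * N) :=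
  castmx (mulnA N N N, mulnA N N N) (kron (1%:M : 'M[R]_N) A).

Definition qnum (C : numFieldType) (q : C) (x : int) : C :=
  if q == 1 then x%:~R else (q ^ x - q ^ (- x)) / (q - q^-1).

(* twice rho_i, for the 1-based index i (1 <= i <= N); n = N./2 *)
Definition rho2 (eps : int) (N : nat) (i : nat) : int :=
  let n := N./2 in
  if eps == 1 then
    if odd N then
      (if (i <= n)%N then (2 * n + 1)%:Z - (2 * i)%:Z
       else if i == n.+1 then 0
       else (2 * n + 3)%:Z - (2 * i)%:Z)
    else
      (if (i <= n)%N then (2 * n)%:Z - (2 * i)%:Z else (2 * n + 2)%:Z - (2 * i)%:Z)
  else
    (if (i <= n)%N then (2 * n + 2)%:Z - (2 * i)%:Z else (2 * n)%:Z - (2 * i)%:Z).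

(* epsilon_i for the 1-based index i *)
Definition epsi (eps : int) (N : nat) (i : nat) : int :=
  if eps == 1 then 1 else if (i <= N./2)%N then 1 else -1.

(* q^(rho_i - rho_j) = (sqrt q)^(2 rho_i - 2 rho_j), for q > 0; indices 0-based *)
Definition qrho (C : numClosedFieldType) (q : C) eps N (i j : 'I_N) : C :=
  (sqrtC q) ^ (rho2 eps N i.+1 - rho2 eps N j.+1).

Definition dcoef (C : numClosedFieldType) (q : C) (eps : int) (N : nat) : C :=
  (1 + eps%:~R * qnum q (N%:Z - eps))^-1.

(* P_(0) = d * sum_{i,j} q^(rho_i - rho_j) eps_i eps_j E_{i',j} (x) E_{i,j'} ;
   i' = N+1-i is rev_ord i in 0-based indexing. *)
Definition P0 (C : numClosedFieldType) (q : C) (eps : int) (N : nat) : 'M[C]_(N * N) :=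
  dcoef q eps N *: \sum_(i < N) \sum_(j < N)
     ((@qrho C q eps N i j * (epsi eps N i.+1)%:~R * (epsi eps N j.+1)%:~R)
        *: kron (delta_mx (rev_ord i) j : 'M[C]_N) (delta_mx i (rev_ord j) : 'M[C]_N)).

Definition Rhat (C : numClosedFieldType) (q : C) (eps : int) (N : nat) (w : C)
  : 'M[C]_(N * N) := 1%:M + w *: P0 q eps N.

From mathcomp Require Import all_boot all_order all_algebra.
From mathcomp Require Import zify ring.
Import Order.TTheory GRing.Theory Num.Theory.
Set Implicit Arguments. Unset Strict Implicit. Unset Printing Implicit Defensive.
Local Open Scope ring_scope.

(* The coefficients of P_(0) factor as q^(rho_i - rho_j) eps_i eps_j = u_i / u_j,
   so P_(0) is d times a rank-one operator and P_(0)^2 = d t P_(0) with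
   t = sum_i eps_i eps_i' q^(rho_i' - rho_i) = eps sum_i q^(-2 rho_i); a
   telescoping geometric sum gives t = 1 + eps [N - eps] = 1/d, so P_(0) is an
   idempotent. The same factorisation yields the Temperley-Lieb relations
   P_12 P_23 P_12 = d^2 P_12 and P_23 P_12 P_23 = d^2 P_23. For idempotents X, Y
   with XYX = kX and YXY = kY, the product (1 + wX)(1 + wY)(1 + wX) is symmetric
   in X and Y as soon as k w^2 + w + 1 = 0, whose roots for k = d^2 are w_+ and
   w_-. Finally (1 + aX)(1 + bX) = 1 + (a + b + ab)X, and w_+ + w_- + w_+ w_- = 0. *)

Section Flattening.
Variables m n : nat.

Lemma eq_pidx (a c : 'I_m) (b e : 'I_n) :
  (pidx a b == pidx c e) = (a == c) && (b == e).
Proof.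
apply/eqP/andP => [/(congr1 val) /= H | [/eqP -> /eqP ->] //].
have hb := ltn_ord b; have he := ltn_ord e.
have hac : (a : nat) = c by nia.
split; apply/eqP/val_inj => //=; lia.
Qed.

Lemma unpidx_proof (k : 'I_(m * n.+1)) : (k %/ n.+1 < m)%N.
Proof. by rewrite ltn_divLR // ltn_ord. Qed.

Definition unpidx (k : 'I_(m * n.+1)) : 'I_m * 'I_n.+1 :=
  (Ordinal (unpidx_proof k), Ordinal (ltn_pmod k (ltn0Sn n))).

Lemma unpidxK (k : 'I_(m * n.+1)) : pidx (unpidx k).1 (unpidx k).2 = k.
Proof. by apply: val_inj => /=; rewrite -divn_eq. Qed.

Lemma pidxK (a : 'I_m) (b : 'I_n.+1) : unpidx (pidx a b) = (a, b).
Proof.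
congr (_, _); apply: val_inj => /=.
  by rewrite divnMDl // divn_small // addn0.
by rewrite modnMDl modn_small.
Qed.

End Flattening.

Lemma pidx_surj m n (k : 'I_(m * n)) : exists a b, k = pidx a b.
Proof.
case: n k => [|n'] k; first by have := ltn_ord k; lia.
by exists (unpidx k).1, (unpidx k).2; rewrite unpidxK.
Qed.

Lemma big_pidx (R : nmodType) m n (F : 'I_(m * n) -> R) :
  \sum_(k < m * n) F k = \sum_(a < m) \sum_(b < n) F (pidx a b).
Proof.
case: n F => [|n'] F.
  rewrite big1; last by move=> k; have := ltn_ord k; lia.
  by rewrite big1 // => a _; rewrite big_ord0.
rewrite pair_big (reindex (fun p : 'I_m * 'I_n'.+1 => pidx p.1 p.2)) //.
by exists (@unpidx m n') => [[a b] _ | k _]; rewrite ?pidxK ?unpidxK.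
Qed.

Lemma matrix_pidxP (R : Type) m n p r (A B : 'M[R]_(m * n, p * r)) :
  (forall a b c e, A (pidx a b) (pidx c e) = B (pidx a b) (pidx c e)) -> A = B.
Proof.
move=> eqAB; apply/matrixP => i j.
by case: (pidx_surj i) => a [b ->]; case: (pidx_surj j) => c [e ->].
Qed.

Lemma matrix_pidx3P (R : Type) N (A B : 'M[R]_(N * N * N)) :
  (forall a b c a' b' c', A (pidx (pidx a b) c) (pidx (pidx a' b') c') =
     B (pidx (pidx a b) c) (pidx (pidx a' b') c')) -> A = B.
Proof.
move=> eqAB; apply: matrix_pidxP => i c j c'.
by case: (pidx_surj i) => a [b ->]; case: (pidx_surj j) => a' [b' ->].
Qed.

Lemma big_pidx3 (R : nmodType) N (F : 'I_(N * N * N) -> R) :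
  \sum_(k < N * N * N) F k =
  \sum_(a < N) \sum_(b < N) \sum_(c < N) F (pidx (pidx a b) c).
Proof. by rewrite !big_pidx. Qed.

Lemma sum_eq_natr_mul (R : pzSemiRingType) n (x : 'I_n) (G : 'I_n -> R) :
  \sum_(i < n) (i == x)%:R * G i = G x.
Proof.
rewrite (bigD1 x) //= eqxx mul1r big1 ?addr0 // => i /negbTE ->.
by rewrite mul0r.
Qed.

Lemma kronE (R : pzRingType) m n p r (A : 'M[R]_(m, n)) (B : 'M[R]_(p, r)) a b c e :
  kron A B (pidx a b) (pidx c e) = A a c * B b e.
Proof.
rewrite mxE (bigD1 a) //= [X in _ + X]big1 ?addr0 => [|a' ha]; last first.
  by rewrite big1 // => b' _; rewrite big1 // => c' _; rewrite big1 // => e' _;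
     rewrite eq_pidx (negbTE ha).
rewrite (bigD1 b) //= [X in _ + X]big1 ?addr0 => [|b' hb]; last first.
  by rewrite big1 // => c' _; rewrite big1 // => e' _;
     rewrite eq_pidx eqxx (negbTE hb).
rewrite (bigD1 c) //= [X in _ + X]big1 ?addr0 => [|c' hc]; last first.
  by rewrite big1 // => e' _; rewrite !eq_pidx !eqxx (negbTE hc).
rewrite (bigD1 e) //= [X in _ + X]big1 ?addr0 => [|e' he]; last first.
  by rewrite !eq_pidx !eqxx (negbTE he).
by rewrite !eq_pidx !eqxx.
Qed.

Lemma pidxA N (a b c : 'I_N) :
  cast_ord (esym (mulnA N N N)) (pidx (pidx a b) c) = pidx a (pidx b c).
Proof. by apply: val_inj => /=; rewrite mulnDl -mulnA addnA. Qed.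

Section TensorEmbeddings.
Variables (R : comPzRingType) (N : nat).
Implicit Types A B : 'M[R]_(N * N).

Lemma op12E A a b c a' b' c' :
  op12 A (pidx (pidx a b) c) (pidx (pidx a' b') c') =
  A (pidx a b) (pidx a' b') * (c == c')%:R.
Proof. by rewrite /op12 kronE mxE. Qed.

Lemma op23E A a b c a' b' c' :
  op23 A (pidx (pidx a b) c) (pidx (pidx a' b') c') =
  (a == a')%:R * A (pidx b c) (pidx b' c').
Proof. by rewrite /op23 castmxE !pidxA kronE mxE. Qed.

Lemma op12_1 : op12 (1%:M : 'M[R]_(N * N)) = 1%:M.
Proof.
by apply: matrix_pidx3P => *; rewrite op12E !mxE !eq_pidx -natrM mulnb.
Qed.

Lemma op23_1 : op23 (1%:M : 'M[R]_(N * N)) = 1%:M.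
Proof.
by apply: matrix_pidx3P => *; rewrite op23E !mxE !eq_pidx -natrM mulnb andbA.
Qed.

Lemma op12D A B : op12 (A + B) = op12 A + op12 B.
Proof. by apply: matrix_pidx3P => *; rewrite [RHS]mxE !op12E mxE mulrDl. Qed.

Lemma op23D A B : op23 (A + B) = op23 A + op23 B.
Proof. by apply: matrix_pidx3P => *; rewrite [RHS]mxE !op23E mxE mulrDr. Qed.

Lemma op12Z (w : R) A : op12 (w *: A) = w *: op12 A.
Proof. by apply: matrix_pidx3P => *; rewrite [RHS]mxE !op12E mxE mulrA. Qed.

Lemma op23Z (w : R) A : op23 (w *: A) = w *: op23 A.
Proof. by apply: matrix_pidx3P => *; rewrite [RHS]mxE !op23E mxE mulrCA. Qed.

Lemma op12M A B : op12 (A *m B) = op12 A *m op12 B.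
Proof.
apply: matrix_pidx3P => a b c a' b' c'.
rewrite op12E !mxE big_pidx big_pidx3 mulr_suml; apply: eq_bigr => g _.
rewrite mulr_suml; apply: eq_bigr => h _.
rewrite -(sum_eq_natr_mul c
  (fun k => A (pidx a b) (pidx g h) * B (pidx g h) (pidx a' b') * (k == c')%:R)).
by apply: eq_bigr => k _; rewrite !op12E [c == k]eq_sym; ring.
Qed.

Lemma op23M A B : op23 (A *m B) = op23 A *m op23 B.
Proof.
apply: matrix_pidx3P => a b c a' b' c'.
rewrite op23E !mxE big_pidx big_pidx3.
rewrite -(sum_eq_natr_mul a (fun g => (g == a')%:R * \sum_(h < N) \sum_(k < N)
   A (pidx b c) (pidx h k) * B (pidx h k) (pidx b' c'))).
apply: eq_bigr => g _; rewrite !mulr_sumr; apply: eq_bigr => h _; rewrite !mulr_sumr.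
by apply: eq_bigr => k _; rewrite !op23E [a == g]eq_sym; ring.
Qed.

End TensorEmbeddings.

Lemma mulmx_affine_idem (R : comPzRingType) m (X : 'M[R]_m) (a b : R) :
  X *m X = X -> (1%:M + a *: X) *m (1%:M + b *: X) = 1%:M + (a + b + a * b) *: X.
Proof.
move=> XX; rewrite mulmxDl !mulmxDr !mul1mx mulmx1 -!scalemxAl -scalemxAr XX scalerA.
by apply/matrixP => i j; rewrite !mxE; ring.
Qed.

Lemma affine_triple_TL (R : comPzRingType) m (X Y : 'M[R]_m) (k w : R) :
  X *m X = X -> X *m Y *m X = k *: X -> k * w ^+ 2 + w + 1 = 0 ->
  (1%:M + w *: X) *m (1%:M + w *: Y) *m (1%:M + w *: X)
  = 1%:M + w *: (X + Y) + w ^+ 2 *: (X *m Y + Y *m X).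
Proof.
move=> XX XYX hw.
do 3 rewrite ?mulmxDl ?mulmxDr ?mul1mx ?mulmx1 -?scalemxAl -?scalemxAr ?scalerA.
rewrite XX XYX scalerA.
move: (X *m Y) (Y *m X) => XY YX.
apply/matrixP => i j; rewrite !mxE.
apply/eqP; rewrite -subr_eq0; apply/eqP.
(* the terms left over add up to w X (k w^2 + w + 1) *)
rewrite -(mulr0 (w * X i j)) -hw; ring.
Qed.

Lemma braid_affine_TL (R : comPzRingType) m (X Y : 'M[R]_m) (k w : R) :
  X *m X = X -> Y *m Y = Y -> X *m Y *m X = k *: X -> Y *m X *m Y = k *: Y ->
  k * w ^+ 2 + w + 1 = 0 ->
  (1%:M + w *: X) *m (1%:M + w *: Y) *m (1%:M + w *: X)
  = (1%:M + w *: Y) *m (1%:M + w *: X) *m (1%:M + w *: Y).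
Proof.
move=> XX YY XYX YXY hw.
by rewrite (affine_triple_TL XX XYX hw) (affine_triple_TL YY YXY hw) [Y + X]addrC
  [Y *m X + _]addrC.
Qed.

Lemma affine_interpolation (F : fieldType) m (A : 'M[F]_m) (a b w : F) : a != b ->
  1%:M + w *: A = (a - b)^-1 *: ((w - b) *: (1%:M + a *: A) - (w - a) *: (1%:M + b *: A)).
Proof.
move=> ab; apply/matrixP => i j; rewrite !mxE.
by field; rewrite subr_eq0.
Qed.

Section TLRoots.
Variables (F : numFieldType) (c r : F).
Hypotheses (c0 : c != 0) (hr : r ^+ 2 = 1 - 4 * c).

Lemma TL_root : c * ((-1 + r) / (2 * c)) ^+ 2 + (-1 + r) / (2 * c) + 1 = 0.
Proof.
have two0 : (2 : F) != 0 by rewrite pnatr_eq0.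
have -> : c * ((-1 + r) / (2 * c)) ^+ 2 + (-1 + r) / (2 * c) + 1
         = (r ^+ 2 - (1 - 4 * c)) / (4 * c) by field.
by rewrite hr subrr mul0r.
Qed.

Lemma TL_roots_vieta :
  (-1 + r) / (2 * c) + (-1 - r) / (2 * c) + (-1 + r) / (2 * c) * ((-1 - r) / (2 * c)) = 0.
Proof.
have two0 : (2 : F) != 0 by rewrite pnatr_eq0.
have -> : (-1 + r) / (2 * c) + (-1 - r) / (2 * c) + (-1 + r) / (2 * c) * ((-1 - r) / (2 * c))
         = ((1 - 4 * c) - r ^+ 2) / (4 * c ^+ 2) by field.
by rewrite hr subrr mul0r.
Qed.

Lemma TL_roots_neq : r != 0 -> (-1 + r) / (2 * c) != (-1 - r) / (2 * c).
Proof.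
move=> r0; have two0 : (2 : F) != 0 by rewrite pnatr_eq0.
rewrite -subr_eq0; have -> : (-1 + r) / (2 * c) - (-1 - r) / (2 * c) = r / c by field.
by rewrite mulf_neq0 ?invr_eq0.
Qed.

End TLRoots.

Definition P0coef (C : numClosedFieldType) (q : C) eps N (i j : 'I_N) : C :=
  @qrho C q eps N i j * (epsi eps N i.+1)%:~R * (epsi eps N j.+1)%:~R.

Lemma P0_pidx (C : numClosedFieldType) (q : C) eps N a b c e :
  P0 q eps N (pidx a b) (pidx c e) =
  dcoef q eps N * ((a == rev_ord b)%:R * (e == rev_ord c)%:R * P0coef q eps b c).
Proof.
rewrite /P0 mxE summxE; congr (_ * _).
rewrite (bigD1 b) //= [X in _ + X]big1 ?addr0 => [|i hi]; last first.
  rewrite summxE big1 // => j _.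
  by rewrite mxE kronE !mxE [b == i]eq_sym (negbTE hi) /= !(mulr0, mul0r).
rewrite summxE (bigD1 c) //= [X in _ + X]big1 ?addr0 => [|j hj]; last first.
  by rewrite mxE kronE !mxE [c == j]eq_sym (negbTE hj) andbF /= !(mulr0, mul0r).
by rewrite mxE kronE !mxE !eqxx !andbT /P0coef; ring.
Qed.

Lemma epsi_sqr (C : pzRingType) eps N i :
  (epsi eps N i)%:~R * (epsi eps N i)%:~R = 1 :> C.
Proof. by rewrite /epsi; case: ifP => _; [|case: ifP => _]; rewrite ?mulrNN mulr1. Qed.

Section Coefficients.
Variables (C : numClosedFieldType) (q : C) (eps : int) (N : nat).
Hypothesis q_gt0 : 0 < q.
Local Notation f := (@P0coef C q eps N).
Local Notation r i := (rho2 eps N (nat_of_ord i).+1).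
Local Notation e i := ((epsi eps N (nat_of_ord i).+1)%:~R : C).

Lemma P0coef_chain (x y z : 'I_N) : f x y * f y z = f x z.
Proof.
rewrite /P0coef /qrho.
transitivity (sqrtC q ^ (r x - r y) * sqrtC q ^ (r y - r z) * e x * e z * (e y * e y)).
  by ring.
rewrite epsi_sqr mulr1 -expfzDr; last by rewrite sqrtC_eq0 gt_eqF.
by rewrite addrA subrK.
Qed.

Lemma P0coef_chain3 (x y z w : 'I_N) : f x y * f y z * f z w = f x w.
Proof. by rewrite !P0coef_chain. Qed.

End Coefficients.

Lemma rev_ord_eqC n (x y : 'I_n) : (x == rev_ord y) = (y == rev_ord x).
Proof. by apply/eqP/eqP => ->; rewrite rev_ordK. Qed.

Section TemperleyLieb.
Variables (C : numClosedFieldType) (q : C) (eps : int) (N : nat).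
Hypothesis q_gt0 : 0 < q.
Local Notation P := (P0 q eps N).
Local Notation d := (dcoef q eps N).
Local Notation f := (@P0coef C q eps N).

Definition P0trace := \sum_(g < N) f (rev_ord g) g.

Lemma P0_mul_self : P *m P = (d * P0trace) *: P.
Proof.
apply: matrix_pidxP => a b c e.
rewrite mxE big_pidx mxE P0_pidx.
transitivity (\sum_(g < N) \sum_(h < N) (h == rev_ord g)%:R *
   (d * d * (a == rev_ord b)%:R * (e == rev_ord c)%:R * f b g * (g == rev_ord h)%:R * f h c)).
  by apply: eq_bigr => g _; apply: eq_bigr => h _; rewrite !P0_pidx; ring.
under eq_bigr => g _ do rewrite sum_eq_natr_mul rev_ordK eqxx mulr1.
rewrite /P0trace mulr_sumr mulr_suml; apply: eq_bigr => g _.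
rewrite -(P0coef_chain eps q_gt0 b g c) -(P0coef_chain eps q_gt0 (rev_ord g) g c); ring.
Qed.

Lemma op12_op23_P0E a b c x y z :
  (op12 P *m op23 P) (pidx (pidx a b) c) (pidx (pidx x y) z) =
  d ^+ 2 * (a == rev_ord b)%:R * (x == c)%:R * (z == rev_ord y)%:R * f b x * f c y.
Proof.
rewrite mxE big_pidx3.
transitivity (\sum_(g < N) \sum_(h < N) \sum_(k < N) (k == c)%:R * ((h == rev_ord g)%:R *
   ((g == x)%:R * (d ^+ 2 * (a == rev_ord b)%:R * f b g * (h == rev_ord k)%:R
      * (z == rev_ord y)%:R * f k y)))).
  apply: eq_bigr => g _; apply: eq_bigr => h _; apply: eq_bigr => k _.
  by rewrite op12E op23E !P0_pidx [c == k]eq_sym; ring.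
under eq_bigr => g _ do under eq_bigr => h _ do rewrite sum_eq_natr_mul.
under eq_bigr => g _ do rewrite sum_eq_natr_mul.
by rewrite sum_eq_natr_mul (inj_eq rev_ord_inj); ring.
Qed.

Lemma op23_op12_P0E a b c x y z :
  (op23 P *m op12 P) (pidx (pidx a b) c) (pidx (pidx x y) z) =
  d ^+ 2 * (b == rev_ord c)%:R * (a == z)%:R * (y == rev_ord x)%:R
    * f c (rev_ord z) * f (rev_ord z) x.
Proof.
rewrite mxE big_pidx3.
transitivity (\sum_(g < N) \sum_(h < N) \sum_(k < N) (k == z)%:R * ((h == rev_ord k)%:R *
   ((g == a)%:R * (d ^+ 2 * (b == rev_ord c)%:R * f c h * (g == rev_ord h)%:R
      * (y == rev_ord x)%:R * f h x)))).
  apply: eq_bigr => g _; apply: eq_bigr => h _; apply: eq_bigr => k _.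
  by rewrite op12E op23E !P0_pidx [a == g]eq_sym [k == rev_ord h]rev_ord_eqC; ring.
under eq_bigr => g _ do under eq_bigr => h _ do rewrite sum_eq_natr_mul.
under eq_bigr => g _ do rewrite sum_eq_natr_mul.
by rewrite sum_eq_natr_mul rev_ordK; ring.
Qed.

Lemma P0_TL12 : op12 P *m op23 P *m op12 P = d ^+ 2 *: op12 P.
Proof.
apply: matrix_pidx3P => a b c a' b' c'.
rewrite mxE big_pidx3 mxE op12E P0_pidx.
transitivity (\sum_(x < N) \sum_(y < N) \sum_(z < N) (z == c')%:R * ((y == rev_ord x)%:R *
   ((x == c)%:R * (d ^+ 3 * (a == rev_ord b)%:R * (z == rev_ord y)%:R *
     (b' == rev_ord a')%:R * f b x * f c y * f y a')))).
  apply: eq_bigr => x _; apply: eq_bigr => y _; apply: eq_bigr => z _.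
  by rewrite op12_op23_P0E op12E P0_pidx [x == rev_ord y]rev_ord_eqC; ring.
under eq_bigr => x _ do under eq_bigr => y _ do rewrite sum_eq_natr_mul.
under eq_bigr => x _ do rewrite sum_eq_natr_mul.
rewrite sum_eq_natr_mul rev_ordK [c' == c]eq_sym.
by rewrite -(P0coef_chain3 eps q_gt0 b c (rev_ord c) a'); ring.
Qed.

Lemma P0_TL23 : op23 P *m op12 P *m op23 P = d ^+ 2 *: op23 P.
Proof.
apply: matrix_pidx3P => a b c a' b' c'.
rewrite mxE big_pidx3 mxE op23E P0_pidx.
transitivity (\sum_(x < N) \sum_(y < N) \sum_(z < N) (z == a)%:R * ((y == rev_ord x)%:R *
   ((x == a')%:R * (d ^+ 3 * (b == rev_ord c)%:R * (y == rev_ord z)%:R *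
     (c' == rev_ord b')%:R * f c (rev_ord z) * f (rev_ord z) x * f z b')))).
  apply: eq_bigr => x _; apply: eq_bigr => y _; apply: eq_bigr => z _.
  by rewrite op23_op12_P0E op23E P0_pidx [a == z]eq_sym; ring.
under eq_bigr => x _ do under eq_bigr => y _ do rewrite sum_eq_natr_mul.
under eq_bigr => x _ do rewrite sum_eq_natr_mul.
rewrite sum_eq_natr_mul (inj_eq rev_ord_inj).
have [->|_] := eqVneq a' a; last by rewrite !(mulr0, mul0r).
by rewrite -(P0coef_chain3 eps q_gt0 c (rev_ord a) a b'); ring.
Qed.

End TemperleyLieb.

Lemma telescope_exprz4 (F : fieldType) (s : F) (a b : nat) (K e1 e2 : int) (G : nat -> F) :
  s != 0 -> (a <= b)%N ->
  (forall i, (a <= i < b)%N -> G i = s ^ (4 * i%:Z - K)) ->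
  e1 = 4 * b%:Z - K - 2 -> e2 = 4 * a%:Z - K - 2 ->
  (s ^ 2 - s ^ (-2)) * \sum_(a <= i < b) G i = s ^ e1 - s ^ e2.
Proof.
move=> s0 hab hG -> ->.
elim: b hab hG => [|b IH] hab hG.
  have -> : a = 0%N by lia.
  by rewrite big_geq // mulr0 subrr.
have [hab'|hba] := leqP a b; last first.
  have -> : a = b.+1 by lia.
  by rewrite big_geq // mulr0 subrr.
rewrite big_nat_recr //= mulrDr IH //; last by move=> i hi; apply: hG; lia.
rewrite hG; last by lia.
rewrite mulrBl -!expfzDr //.
have -> : 2 + (4 * b%:Z - K) = 4 * b.+1%:Z - K - 2 by lia.
have -> : -2 + (4 * b%:Z - K) = 4 * b%:Z - K - 2 by lia.
ring.
Qed.

Section RhoSymmetry.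
Variables (eps : int) (N : nat).
Hypotheses (heps : eps = 1 \/ eps = -1) (hodd : eps = -1 -> ~~ odd N).

Lemma rho2_rev g : (g < N)%N -> rho2 eps N (N - g.+1).+1 = - rho2 eps N g.+1.
Proof.
move=> hg; rewrite /rho2; have := odd_double_half N.
case: heps => ?; subst eps => /=.
  by case: (odd N) => /= hN; repeat case: ifP; lia.
by have := hodd erefl; case: (odd N) => //= _ hN; repeat case: ifP; lia.
Qed.

Lemma epsi_rev g : (g < N)%N -> epsi eps N (N - g.+1).+1 * epsi eps N g.+1 = eps.
Proof.
move=> hg; rewrite /epsi; have := odd_double_half N.
case: heps => ?; subst eps => //=.
by have := hodd erefl; case: (odd N) => //= _ hN; repeat case: ifP; lia.
Qed.

End RhoSymmetry.

Lemma subr_invr_neq0 (F : numFieldType) (x : F) : 0 < x -> x != 1 -> x - x^-1 != 0.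
Proof.
move=> x_gt0 x1; apply: contra x1; rewrite subr_eq0 => /eqP xE.
by rewrite -(pexpr_eq1 (ltn0Sn 1) (ltW x_gt0)) expr2 {2}xE divff // gt_eqF.
Qed.

Section TraceValue.
Variables (C : numClosedFieldType) (q : C) (eps : int) (N : nat).
Hypotheses (heps : eps = 1 \/ eps = -1) (hodd : eps = -1 -> ~~ odd N) (q_gt0 : 0 < q).
Local Notation s := (sqrtC q).

(* rho2 is twice rho, so the summand is q ^ (- 2 rho_i). *)
Definition rho_sum := \sum_(1 <= i < N.+1) s ^ (- rho2 eps N i - rho2 eps N i).

Lemma P0trace_rho_sum : P0trace q eps N = eps%:~R * rho_sum.
Proof.
rewrite /rho_sum big_add1 /= big_mkord mulr_sumr; apply: eq_bigr => g _.
by rewrite /P0coef /qrho /= rho2_rev // -mulrA -intrM epsi_rev //; ring.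
Qed.

Let s_neq0 : s != 0. Proof. by rewrite sqrtC_eq0 gt_eqF. Qed.

Lemma rho_sum_odd : eps = 1 -> odd N ->
  (s ^ 2 - s ^ (-2)) * rho_sum
  = eps%:~R * (s ^ 2 - s ^ (-2)) + (s ^ (2 * (N%:Z - eps)) - s ^ (2 * (- (N%:Z - eps)))).
Proof.
move=> e1 oddN; have := odd_double_half N; rewrite oddN /=.
have [n hn] : exists n, N./2 = n by eauto.
rewrite hn => hN.
rewrite /rho_sum (@big_cat_nat _ _ _ n.+1) //=; last lia.
rewrite (@big_cat_nat _ _ _ n.+2 n.+1 N.+1) //=; last lia.
rewrite big_nat1 mulrDr [X in _ + X = _]mulrDr.
rewrite (@telescope_exprz4 _ s 1 n.+1 (4 * n%:Z + 2) 0 (- (4 * n%:Z))) ?s_neq0 //; first last.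
- lia.
- lia.
- move=> i hi; congr (_ ^ _); rewrite /rho2 /= e1 oddN hn /=; repeat case: ifP; lia.
rewrite (@telescope_exprz4 _ s n.+2 N.+1 (4 * n%:Z + 6) (4 * n%:Z) 0) ?s_neq0 //; first last.
- lia.
- lia.
- move=> i hi; congr (_ ^ _); rewrite /rho2 /= e1 oddN hn /=; repeat case: ifP; lia.
- lia.
have -> : - rho2 eps N n.+1 - rho2 eps N n.+1 = 0.
  by rewrite /rho2 /= e1 oddN hn /=; repeat case: ifP; lia.
have -> : 2 * (N%:Z - eps) = 4 * n%:Z by rewrite e1; lia.
have -> : 2 * (- (N%:Z - eps)) = - (4 * n%:Z) by rewrite e1; lia.
by rewrite e1 expr0z; ring.
Qed.

Lemma rho_sum_even : ~~ odd N ->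
  (s ^ 2 - s ^ (-2)) * rho_sum
  = eps%:~R * (s ^ 2 - s ^ (-2)) + (s ^ (2 * (N%:Z - eps)) - s ^ (2 * (- (N%:Z - eps)))).
Proof.
move=> evenN; have := odd_double_half N; rewrite (negbTE evenN) /=.
have [n hn] : exists n, N./2 = n by eauto.
rewrite hn => hN.
rewrite /rho_sum (@big_cat_nat _ _ _ n.+1) //=; last lia.
rewrite mulrDr; case: heps => e1.
  rewrite (@telescope_exprz4 _ s 1 n.+1 (4 * n%:Z) 2 (2 - 4 * n%:Z)) ?s_neq0 //; first last.
  - lia.
  - lia.
  - move=> i hi; congr (_ ^ _); rewrite /rho2 /= e1 (negbTE evenN) hn /=; repeat case: ifP; lia.
  rewrite (@telescope_exprz4 _ s n.+1 N.+1 (4 * n%:Z + 4) (4 * n%:Z - 2) (-2)) ?s_neq0 //;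
    first last.
  - lia.
  - lia.
  - move=> i hi; congr (_ ^ _); rewrite /rho2 /= e1 (negbTE evenN) hn /=; repeat case: ifP; lia.
  - lia.
  have -> : 2 * (N%:Z - eps) = 4 * n%:Z - 2 by rewrite e1; lia.
  have -> : 2 * (- (N%:Z - eps)) = 2 - 4 * n%:Z by rewrite e1; lia.
  by rewrite e1; ring.
rewrite (@telescope_exprz4 _ s 1 n.+1 (4 * n%:Z + 4) (-2) (- (4 * n%:Z) - 2)) ?s_neq0 //;
  first last.
- lia.
- lia.
- move=> i hi; congr (_ ^ _); rewrite /rho2 /= e1 (negbTE evenN) hn /=; repeat case: ifP; lia.
rewrite (@telescope_exprz4 _ s n.+1 N.+1 (4 * n%:Z) (4 * n%:Z + 2) 2) ?s_neq0 //; first last.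
- lia.
- lia.
- move=> i hi; congr (_ ^ _); rewrite /rho2 /= e1 (negbTE evenN) hn /=; repeat case: ifP; lia.
- lia.
have -> : 2 * (N%:Z - eps) = 4 * n%:Z + 2 by rewrite e1; lia.
have -> : 2 * (- (N%:Z - eps)) = - (4 * n%:Z) - 2 by rewrite e1; lia.
by rewrite e1; ring.
Qed.

Lemma P0trace_val : P0trace q eps N = 1 + eps%:~R * qnum q (N%:Z - eps).
Proof.
have eps_sqr : eps%:~R * eps%:~R = 1 :> C by case: heps => ->; rewrite ?mulrNN mulr1.
rewrite P0trace_rho_sum /qnum; case: ifP => [/eqP q1 | /negbT q1].
  rewrite /rho_sum q1 sqrtC1; under eq_big_nat => i _ do rewrite exp1rz.
  rewrite sumr_const_nat subn1 /= intrD intrN -[N%:R]/((N%:Z)%:~R) mulrBr eps_sqr.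
  by rewrite addrC subrK.
have sqrt_exprz z : q ^ z = s ^ (2 * z).
  by rewrite -exprz_exp -[s ^ 2]/(s ^+ 2) sqrtCK.
have qD : q - q^-1 = s ^ 2 - s ^ (-2).
  by rewrite -invr_expz -[s ^ 2]/(s ^+ 2) sqrtCK.
have D0 := subr_invr_neq0 q_gt0 q1; rewrite qD in D0.
have scaled : (s ^ 2 - s ^ (-2)) * rho_sum
  = eps%:~R * (s ^ 2 - s ^ (-2)) + (s ^ (2 * (N%:Z - eps)) - s ^ (2 * (- (N%:Z - eps)))).
  case oddN : (odd N); last by apply: rho_sum_even; rewrite oddN.
  case: heps => e1; first exact: rho_sum_odd.
  by move: (hodd e1); rewrite oddN.
rewrite !sqrt_exprz qD; apply: (mulfI D0).
rewrite mulrCA scaled mulrDr mulrA eps_sqr mul1r.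
move: (s ^ 2 - s ^ (-2)) (_ - s ^ (2 * - _)) D0 => D X D0.
by field.
Qed.

End TraceValue.

Theorem mainTheorem6 (C : numClosedFieldType) (eps : int) (N : nat) (q : C) :
  (eps = 1 \/ eps = -1) ->
  (2 <= N)%N ->
  (eps = -1 -> ~~ odd N) ->
  0 < q ->
  1 + eps%:~R * qnum q (N%:Z - eps) != 0 ->
  let d := dcoef q eps N in
  4 * d ^+ 2 < 1 ->
  let wp := (-1 + sqrtC (1 - 4 * d ^+ 2)) / (2 * d ^+ 2) in
  let wm := (-1 - sqrtC (1 - 4 * d ^+ 2)) / (2 * d ^+ 2) in
  let R := Rhat q eps N in
  [/\ op12 (R wp) *m op23 (R wp) *m op12 (R wp)
        = op23 (R wp) *m op12 (R wp) *m op23 (R wp),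
      op12 (R wm) *m op23 (R wm) *m op12 (R wm)
        = op23 (R wm) *m op12 (R wm) *m op23 (R wm),
      R wp *m R wm = 1%:M
    & forall w : C, R w = (wp - wm)^-1 *: ((w - wm) *: R wp - (w - wp) *: R wm)].
Proof.
move=> heps _ hodd q_gt0 trace_neq0 d hd wp wm R.
have d2_neq0 : d ^+ 2 != 0 by rewrite expf_neq0 // invr_eq0.
have hr : sqrtC (1 - 4 * d ^+ 2) ^+ 2 = 1 - 4 * d ^+ 2 by rewrite sqrtCK.
have P0_idem : P0 q eps N *m P0 q eps N = P0 q eps N.
  by rewrite P0_mul_self // P0trace_val // mulVf // scale1r.
have braid w : d ^+ 2 * w ^+ 2 + w + 1 = 0 ->
    op12 (R w) *m op23 (R w) *m op12 (R w) = op23 (R w) *m op12 (R w) *m op23 (R w).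
  move=> hw; rewrite /R /Rhat op12D op23D op12Z op23Z op12_1 op23_1.
  by apply: (braid_affine_TL _ _ (P0_TL12 eps N q_gt0) (P0_TL23 eps N q_gt0) hw);
    rewrite -?op12M -?op23M P0_idem.
split.
- exact/braid/TL_root.
- by apply/braid/TL_root; rewrite // sqrrN.
- by rewrite /R /Rhat mulmx_affine_idem // TL_roots_vieta // scale0r addr0.
- move=> w; apply/affine_interpolation/TL_roots_neq => //.
  by rewrite sqrtC_eq0 subr_eq0 eq_sym lt_eqF.
Qed.
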